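(* Let $S(t,x,y,u,v)=\sum_\pi t^{|\pi|}x^{\mathrm{lmax}(\pi)}y^{\mathrm{rmax}(\pi)}u^{\mathrm{lmin}(\pi)}v^{\mathrm{rmin}(\pi)}$ over all separable permutations, and $I(t,x,y,u,v)$ the same sum over irreducible separable permutations. Let $S(t,y,u,v)=\sum_\pi t^{|\pi|}y^{\mathrm{rmax}(\pi)}u^{\mathrm{lmin}(\pi)}v^{\mathrm{rmin}(\pi)}$ and $S(t,x,u,v)=\sum_\pi t^{|\pi|}x^{\mathrm{lmax}(\pi)}u^{\mathrm{lmin}(\pi)}v^{\mathrm{rmin}(\pi)}$, both over all separable permutations. Let $S(t,z)=\sum_\pi t^{|\pi|}z^{\mathrm{rmax}(\pi)}$ over all separable permutations, and $$E(t,z_1,z_2,z_3)=z_1z_2z_3t+\frac{(S(t,z_1)+1)(S(t,z_2)+1)(S(t,z_3)+1)\,t^2z_1^2z_2z_3}{(1-S(t,z_1)S(t,z_3))(1-S(t,z_1)S(t,z_2))}.$$ Then $$I(t,x,y,u,v)=xyuvt+E(t,x,y,u)\,S(t,y,u,v),$$ the corresponding sum over reducible separable permutations equals $E(t,y,x,v)\,S(t,x,u,v)$, and $$S(t,x,y,u,v)=xyuvt+E(t,x,y,u)\,S(t,y,u,v)+E(t,y,x,v)\,S(t,x,u,v).$$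
   Context: A permutation of length $n$ is a word $\pi=\pi_1\cdots\pi_n$ containing each element of $[n]$ exactly once; $|\pi|=n$. For $\pi$ of length $m$, $\sigma$ of length $n$: $\pi\oplus\sigma=\pi_1\cdots\pi_m(\sigma_1+m)\cdots(\sigma_n+m)$, $\pi\ominus\sigma=(\pi_1+n)\cdots(\pi_m+n)\sigma_1\cdots\sigma_n$. Separable permutations are those of length $\ge1$ obtained from $1$ by repeatedly applying $\oplus,\ominus$ (equivalently, avoiding $2413$ and $3142$). The permutation $1$ is irreducible; a permutation of length $n\ge2$ is irreducible if there is no $i$, $2\le i\le n$, such that every element of $\pi_1\cdots\pi_{i-1}$ is less than every element of $\pi_i\cdots\pi_n$; reducible means not irreducible (length $\ge2$). $\pi_i$ is a left-to-right maximum (minimum) if $\pi_i>\pi_j$ ($\pi_i<\pi_j$) for all $j<i$, a right-to-left maximum (minimum) if $\pi_i>\pi_j$ ($\pi_i<\pi_j$) for all $j>i$; $\mathrm{lmax},\mathrm{lmin},\mathrm{rmax},\mathrm{rmin}$ count these. *)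

From mathcomp Require Import all_boot all_order all_algebra all_fingroup.
Set Implicit Arguments. Unset Strict Implicit. Unset Printing Implicit Defensive.
Import GRing.Theory.
Local Open Scope ring_scope.

(* ---------- Formal power series in t over a commutative ring R:
   a series is its coefficient sequence  nat -> R  (coefficient of t^n). *)
Section FPS.
Variable R : comRingType.

Definition fps_add (f g : nat -> R) : nat -> R := fun n => f n + g n.
Definition fps_mul (f g : nat -> R) : nat -> R :=
  fun n => \sum_(i < n.+1) f i * g (n - i)%N.
Definition fps_const (c : R) : nat -> R := fun n => if n == 0%N then c else 0.
Definition fps_mono (c : R) (k : nat) : nat -> R :=
  fun n => if n == k then c else 0.
Definition fps_pow (f : nat -> R) (k : nat) : nat -> R :=
  iter k (fps_mul f) (fps_const 1).
(* 1/(1 - f) as the geometric series sum_k f^k; meaningful (and the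
   unique inverse of 1 - f) when f has zero constant term, since then
   f^k has no terms of degree < k. *)
Definition fps_inv_1m (f : nat -> R) : nat -> R :=
  fun n => \sum_(k < n.+1) fps_pow f k n.
End FPS.

(* ---------- Permutations of length n are elements of 'S_n (on 'I_n,
   values 0..n-1, i.e. the paper's pi_i shifted by one). *)
Section Perms.
Variable n : nat.
Implicit Type p : 'S_n.

Definition lmax p : nat :=
  #|[set i : 'I_n | [forall j : 'I_n, (j < i)%N ==> (p j < p i)%N]]|.
Definition rmax p : nat :=
  #|[set i : 'I_n | [forall j : 'I_n, (i < j)%N ==> (p j < p i)%N]]|.
Definition lmin p : nat :=
  #|[set i : 'I_n | [forall j : 'I_n, (j < i)%N ==> (p i < p j)%N]]|.
Definition rmin p : nat :=
  #|[set i : 'I_n | [forall j : 'I_n, (i < j)%N ==> (p i < p j)%N]]|.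

Definition contains2413 p : bool :=
  [exists i : 'I_n, exists j : 'I_n, exists k : 'I_n, exists l : 'I_n,
     [&& (i < j)%N, (j < k)%N, (k < l)%N,
         (p k < p i)%N, (p i < p l)%N & (p l < p j)%N]].
Definition contains3142 p : bool :=
  [exists i : 'I_n, exists j : 'I_n, exists k : 'I_n, exists l : 'I_n,
     [&& (i < j)%N, (j < k)%N, (k < l)%N,
         (p j < p l)%N, (p l < p i)%N & (p i < p k)%N]].

Definition separable p : bool :=
  [&& (0 < n)%N, ~~ contains2413 p & ~~ contains3142 p].

(* irreducible: p = 1, or length >= 2 and no split point k (1 <= k <= n-1,
   the paper's i = k+1) with every entry before position k smaller than
   every entry from position k on. *)
Definition irreducible p : bool :=
  (n == 1%N) ||
  ((1 < n)%N &&
   ~~ [exists k : 'I_n, (0 < k)%N &&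
        [forall a : 'I_n, forall b : 'I_n,
           ((a < k)%N && (k <= b)%N) ==> (p a < p b)%N]]).
Definition reducible p : bool := (1 < n)%N && ~~ irreducible p.
End Perms.

Section GF.
Variable R : comRingType.

Definition weight n (p : 'S_n) (x y u v : R) : R :=
  x ^+ lmax p * y ^+ rmax p * u ^+ lmin p * v ^+ rmin p.

Definition Sgf (x y u v : R) : nat -> R :=
  fun n => \sum_(p : 'S_n | separable p) weight p x y u v.
Definition Igf (x y u v : R) : nat -> R :=
  fun n => \sum_(p : 'S_n | separable p && irreducible p) weight p x y u v.
Definition Rgf (x y u v : R) : nat -> R :=
  fun n => \sum_(p : 'S_n | separable p && reducible p) weight p x y u v.

Definition S_yuv (y u v : R) : nat -> R := Sgf 1 y u v.
Definition S_xuv (x u v : R) : nat -> R := Sgf x 1 u v.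
Definition S_z (z : R) : nat -> R := Sgf 1 z 1 1.

Definition Egf (z1 z2 z3 : R) : nat -> R :=
  let one := fps_const (1 : R) in
  let s1 := S_z z1 in let s2 := S_z z2 in let s3 := S_z z3 in
  fps_add (fps_mono (z1 * z2 * z3) 1)
    (fps_mul
      (fps_mul
        (fps_mul (fps_mul (fps_add s1 one) (fps_add s2 one)) (fps_add s3 one))
        (fps_mono (z1 ^+ 2 * z2 * z3) 2))
      (fps_mul (fps_inv_1m (fps_mul s1 s3)) (fps_inv_1m (fps_mul s1 s2)))).
End GF.

From mathcomp Require Import all_boot all_order all_algebra all_fingroup.
From mathcomp Require Import zify.
From Stdlib Require Import Ring FunctionalExtensionality.
Set Implicit Arguments. Unset Strict Implicit. Unset Printing Implicit Defensive.
Import GRing.Theory.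

(* Removing the maximum of a separable permutation of length at least two
   leaves a separable permutation, whose sum or skew decomposition either
   extends to the whole permutation or yields a 2413 or 3142 pattern; hence
   such a permutation is a direct sum or, exclusively, a skew sum.  Cutting a
   reducible one at its last sum cut writes it uniquely as [p1 (+) p2] with
   [p2] separable and not sum decomposable; lmax, lmin, rmin of [p1] and lmax,
   rmax, rmin of [p2] make up those of the sum, so
   [R(t,a,b,c,d) = S(t,a,1,c,d) (t a b d + K(t,a,b,1,d))], where [K] counts the
   skew decomposable permutations.  Reversal exchanges sums and skew sums, so
   the same identity expresses [K] through [R], and the resulting linear system
   over the [S(t,z)] solves to [E(t,a,b,c) = t a b c + R(t,a,b,c,1)]. *)

(** * Formal power series *)

Section PowerSeries.
Variable R : comRingType.
Local Open Scope ring_scope.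
Implicit Types (f g h : nat -> R) (c d : R).

(* Coefficient n of a product only involves coefficients up to n, so the
   ring laws are inherited from the truncations to polynomials. *)
Definition fps_trunc n f : {poly R} := \poly_(i < n.+1) f i.

Lemma coef_fps_trunc n f i : (i <= n)%N -> (fps_trunc n f)`_i = f i.
Proof. by move=> lein; rewrite coef_poly ltnS lein. Qed.

Lemma fps_mul_coefM (p q : {poly R}) f g n :
    (forall i, (i <= n)%N -> p`_i = f i) -> (forall i, (i <= n)%N -> q`_i = g i) ->
  fps_mul f g n = (p * q)`_n.
Proof.
move=> pf qg; rewrite coefM; apply: eq_bigr => i _.
by rewrite pf ?qg ?leq_subr // -ltnS.
Qed.

Lemma fps_mul_trunc f g n i :
  (i <= n)%N -> fps_mul f g i = (fps_trunc n f * fps_trunc n g)`_i.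
Proof.
by move=> lein; apply: fps_mul_coefM => j lej; rewrite coef_fps_trunc ?(leq_trans lej).
Qed.

Lemma fps_mulC f g : fps_mul f g = fps_mul g f.
Proof.
apply: functional_extensionality => n.
by rewrite !(fps_mul_trunc _ _ (leqnn n)) mulrC.
Qed.

Lemma fps_mulA f g h : fps_mul f (fps_mul g h) = fps_mul (fps_mul f g) h.
Proof.
apply: functional_extensionality => n.
rewrite (@fps_mul_coefM (fps_trunc n f) (fps_trunc n g * fps_trunc n h)).
- rewrite mulrA; apply/esym/fps_mul_coefM => i lein; last exact: coef_fps_trunc.
  by rewrite (fps_mul_trunc _ _ lein).
- exact: coef_fps_trunc.
- by move=> i lein; rewrite (fps_mul_trunc _ _ lein).
Qed.

Lemma fps_addA f g h : fps_add f (fps_add g h) = fps_add (fps_add f g) h.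
Proof. by apply: functional_extensionality => n; rewrite /fps_add addrA. Qed.

Lemma fps_mulDl f g h :
  fps_mul (fps_add f g) h = fps_add (fps_mul f h) (fps_mul g h).
Proof.
apply: functional_extensionality => n.
by rewrite /fps_mul /fps_add -big_split; apply: eq_bigr => i _; rewrite mulrDl.
Qed.

Lemma fps_mul0 f g : fps_mul f g 0 = f 0%N * g 0%N.
Proof. by rewrite /fps_mul big_ord1. Qed.

Lemma fps_monoM c d k l :
  fps_mul (fps_mono c k) (fps_mono d l) = fps_mono (c * d) (k + l).
Proof.
apply: functional_extensionality => n.
rewrite (@fps_mul_coefM (c *: 'X^k) (d *: 'X^l)); first last.
- by move=> i _; rewrite coefZ coefXn /fps_mono; case: eqP; rewrite ?mulr1 ?mulr0.
- by move=> i _; rewrite coefZ coefXn /fps_mono; case: eqP; rewrite ?mulr1 ?mulr0.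
rewrite -scalerAl -scalerAr scalerA -exprD coefZ coefXn /fps_mono.
by case: eqP; rewrite ?mulr1 ?mulr0.
Qed.

Lemma fps_mul1 f : fps_mul (fps_const 1) f = f.
Proof.
apply: functional_extensionality => n.
rewrite /fps_mul big_ord_recl /fps_const /= mul1r subn0 big1 ?addr0 // => i _.
by rewrite mul0r.
Qed.

(* [fps_const c] is convertible to [fps_mono c 0]. *)
Lemma fps_constM c d :
  fps_const (c * d) = fps_mul (fps_const c) (fps_const d).
Proof. exact/esym/fps_monoM. Qed.

Definition fps_X : nat -> R := fps_mono 1 1.

Lemma fps_mono1E c : fps_mono c 1 = fps_mul (fps_const c) fps_X.
Proof. by rewrite [RHS]fps_monoM mulr1. Qed.

Lemma fps_mono2E c :
  fps_mono c 2 = fps_mul (fps_const c) (fps_mul fps_X fps_X).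
Proof. by rewrite /fps_X !fps_monoM !mulr1. Qed.

Definition fps_opp f : nat -> R := fun n => - f n.
Definition fps_sub f g : nat -> R := fps_add f (fps_opp g).

Lemma fps_ring_theory :
  ring_theory (fps_const 0) (fps_const 1) (@fps_add R) (@fps_mul R)
    fps_sub fps_opp (@eq (nat -> R)).
Proof.
split=> //.
- move=> f; apply: functional_extensionality => n.
  by rewrite /fps_add /fps_const; case: eqP; rewrite add0r.
- by move=> f g; apply: functional_extensionality => n; rewrite /fps_add addrC.
- exact: fps_addA.
- exact: fps_mul1.
- exact: fps_mulC.
- exact: fps_mulA.
- exact: fps_mulDl.
- move=> f; apply: functional_extensionality => n.
  by rewrite /fps_add /fps_opp /fps_const subrr; case: eqP.
Qed.

Add Ring fps_ring : fps_ring_theory.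

Lemma fps_pow_small f : f 0%N = 0 -> forall k n, (n < k)%N -> fps_pow f k n = 0.
Proof.
move=> f0; elim=> [//|k IHk] n ltnk.
rewrite /fps_pow iterS -/(fps_pow f k) /fps_mul big1 // => -[[|i] ltin] _ /=.
  by rewrite f0 mul0r.
by rewrite IHk ?mulr0 //; lia.
Qed.

Lemma fps_inv_1m_widen f n N : f 0%N = 0 -> (n < N)%N ->
  fps_inv_1m f n = \sum_(k < N) fps_pow f k n.
Proof.
move=> f0 ltnN; rewrite /fps_inv_1m (big_ord_widen N (fun k => fps_pow f k n) ltnN).
rewrite big_mkcond; apply: eq_bigr => k _.
by case: ifP => // /negbT; rewrite -leqNgt => lenk; rewrite fps_pow_small.
Qed.

Lemma fps_inv_1mE f : f 0%N = 0 ->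
  fps_inv_1m f = fps_add (fps_const 1) (fps_mul f (fps_inv_1m f)).
Proof.
move=> f0; apply: functional_extensionality => n.
rewrite /fps_add [fps_mul f _ n]/fps_mul.
under eq_bigr => i _.
  rewrite (@fps_inv_1m_widen f (n - i) n.+1) ?ltnS ?leq_subr // big_distrr.
over.
rewrite exchange_big (@fps_inv_1m_widen f n n.+2) // big_ord_recl.
by congr (_ + _); apply: eq_bigr => k _; rewrite add0n.
Qed.

Lemma fps_fixpoint_uniq g (c A B : nat -> R) : g 0%N = 0 ->
  A = fps_add c (fps_mul g A) -> B = fps_add c (fps_mul g B) -> A = B.
Proof.
move=> g0 eA eB; apply: functional_extensionality => n.
elim/ltn_ind: n => n IHn.
rewrite eA eB /fps_add /fps_mul; congr (_ + _); apply: eq_bigr => -[[|i] ltin] _ /=.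
  by rewrite g0 !mul0r.
by rewrite IHn //; lia.
Qed.

Lemma fps_fixpointE g (c A : nat -> R) : g 0%N = 0 ->
  A = fps_add c (fps_mul g A) -> A = fps_mul c (fps_inv_1m g).
Proof.
move=> g0 eA; apply: (fps_fixpoint_uniq g0 eA).
by rewrite {1}(fps_inv_1mE g0); ring.
Qed.

End PowerSeries.

(** * Sum and skew decompositions of sequences *)

(* A permutation of length [n] is handled through its values on [0, n) as a
   function [nat -> nat]; values outside [0, n) are irrelevant. *)
Section Sequences.
Implicit Types (f g h : nat -> nat) (n m k : nat).

Definition records n f (from_left maxima : bool) : nat :=
  count (fun i => all (fun j => (if from_left then j < i else i < j) ==>
                                (if maxima then f j < f i else f i < f j))
                      (iota 0 n))
        (iota 0 n).

Definition sum_cut n f k :=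
  all (fun a => all (fun b => f a < f b) (iota k (n - k))) (iota 0 k).
Definition skew_cut n f k :=
  all (fun a => all (fun b => f b < f a) (iota k (n - k))) (iota 0 k).
Definition sum_dec n f := has (fun k => (0 < k) && sum_cut n f k) (iota 0 n).
Definition skew_dec n f := has (fun k => (0 < k) && skew_cut n f k) (iota 0 n).

Definition pat2413 n f : Prop := exists i j k l,
  [/\ i < j, j < k, k < l, l < n & [/\ f k < f i, f i < f l & f l < f j]].
Definition pat3142 n f : Prop := exists i j k l,
  [/\ i < j, j < k, k < l, l < n & [/\ f j < f l, f l < f i & f i < f k]].

Definition inj_below n f := forall i j, i < n -> j < n -> f i = f j -> i = j.
Definition eqfun_below n f g := forall i, i < n -> f i = g i.

Lemma sum_cutP n f k : k <= n ->
  reflect (forall a b, a < k -> k <= b -> b < n -> f a < f b) (sum_cut n f k).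
Proof.
move=> lekn; apply: (iffP allP) => [cut a b ltak lekb ltbn | cut a].
- have := cut a; rewrite mem_iota add0n => /(_ ltak) /allP; apply.
  by rewrite mem_iota; lia.
- rewrite mem_iota => ltak; apply/allP => b; rewrite mem_iota => leb.
  apply: cut; lia.
Qed.

Lemma skew_cutP n f k : k <= n ->
  reflect (forall a b, a < k -> k <= b -> b < n -> f b < f a) (skew_cut n f k).
Proof.
move=> lekn; apply: (iffP allP) => [cut a b ltak lekb ltbn | cut a].
- have := cut a; rewrite mem_iota add0n => /(_ ltak) /allP; apply.
  by rewrite mem_iota; lia.
- rewrite mem_iota => ltak; apply/allP => b; rewrite mem_iota => leb.
  apply: cut; lia.
Qed.

Lemma sum_decP n f :
  reflect (exists k, [/\ 0 < k, k < n & sum_cut n f k]) (sum_dec n f).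
Proof.
apply: (iffP hasP) => [[k] | [k [k0 ltkn cut]]].
- by rewrite mem_iota => ltkn /andP[k0 cut]; exists k.
- by exists k; rewrite ?mem_iota ?k0.
Qed.

Lemma skew_decP n f :
  reflect (exists k, [/\ 0 < k, k < n & skew_cut n f k]) (skew_dec n f).
Proof.
apply: (iffP hasP) => [[k] | [k [k0 ltkn cut]]].
- by rewrite mem_iota => ltkn /andP[k0 cut]; exists k.
- by exists k; rewrite ?mem_iota ?k0.
Qed.

Lemma sum_cutN n f k :
  ~~ sum_cut n f k -> exists a b, [/\ a < k, k <= b, b < n & f b <= f a].
Proof.
rewrite /sum_cut -has_predC => /hasP[a]; rewrite mem_iota => ltak /=.
rewrite -has_predC => /hasP[b]; rewrite mem_iota => leb /=; rewrite -leqNgt => lefba.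
by exists a, b; split=> //; lia.
Qed.

Lemma sum_skew_dec_exclusive n f : sum_dec n f -> skew_dec n f -> False.
Proof.
move=> /sum_decP[k [k0 ltkn /(sum_cutP _ (ltnW ltkn)) sumk]].
move=> /skew_decP[j [j0 ltjn /(skew_cutP _ (ltnW ltjn)) skewj]].
by have := sumk 0 n.-1; have := skewj 0 n.-1; lia.
Qed.

Lemma records_ext n f g l x :
  eqfun_below n f g -> records n f l x = records n g l x.
Proof.
move=> efg; apply: eq_in_count => i; rewrite mem_iota => lti.
by apply: eq_in_all => j; rewrite mem_iota => ltj; rewrite !efg //; lia.
Qed.

Lemma sum_cut_ext n f g k : eqfun_below n f g -> sum_cut n f k = sum_cut n g k.
Proof.
move=> efg; apply: eq_in_all => a; rewrite mem_iota => lta.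
apply: eq_in_all => b; rewrite mem_iota => ltb.
by rewrite !efg //; lia.
Qed.

Lemma sum_dec_ext n f g : eqfun_below n f g -> sum_dec n f = sum_dec n g.
Proof. by move=> efg; apply: eq_has => k; rewrite /= (sum_cut_ext k efg). Qed.

Lemma pat2413_embed n m f g (e : nat -> nat) :
    (forall i j, i < j -> j < m -> e i < e j) -> (forall i, i < m -> e i < n) ->
    (forall i j, i < m -> j < m -> (g i < g j) = (f (e i) < f (e j))) ->
  pat2413 m g -> pat2413 n f.
Proof.
move=> emono erange efg [i [j [k [l [lij ljk lkl ltl [v1 v2 v3]]]]]].
exists (e i), (e j), (e k), (e l); split; try apply: emono; try lia.
- by apply: erange.
- by split; rewrite -efg //; lia.
Qed.

Lemma pat3142_embed n m f g (e : nat -> nat) :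
    (forall i j, i < j -> j < m -> e i < e j) -> (forall i, i < m -> e i < n) ->
    (forall i j, i < m -> j < m -> (g i < g j) = (f (e i) < f (e j))) ->
  pat3142 m g -> pat3142 n f.
Proof.
move=> emono erange efg [i [j [k [l [lij ljk lkl ltl [v1 v2 v3]]]]]].
exists (e i), (e j), (e k), (e l); split; try apply: emono; try lia.
- by apply: erange.
- by split; rewrite -efg //; lia.
Qed.

Lemma pat2413_ext n f g : eqfun_below n f g -> pat2413 n f -> pat2413 n g.
Proof. by move=> efg; apply: (pat2413_embed (e := id)) => // i j *; rewrite !efg. Qed.

Lemma pat3142_ext n f g : eqfun_below n f g -> pat3142 n f -> pat3142 n g.
Proof. by move=> efg; apply: (pat3142_embed (e := id)) => // i j *; rewrite !efg. Qed.

Definition revf n f := fun i => f (n - i.+1).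
Definition complf n f := fun i => n - (f i).+1.

Lemma revfK n f : eqfun_below n (revf n (revf n f)) f.
Proof. by move=> i lti; rewrite /revf; congr f; lia. Qed.

Lemma map_rev_iota n : map (fun i => n - i.+1) (iota 0 n) = rev (iota 0 n).
Proof.
apply: (@eq_from_nth _ 0); first by rewrite size_map size_rev.
move=> i; rewrite size_map size_iota => lti.
by rewrite (nth_map 0) ?size_iota // nth_rev ?size_iota // !nth_iota //; lia.
Qed.

Lemma records_revf n f l x : records n (revf n f) l x = records n f (~~ l) x.
Proof.
rewrite /records -[RHS]count_rev -map_rev_iota count_map.
apply: eq_in_count => i; rewrite mem_iota => lti /=.
rewrite -[RHS]all_rev -map_rev_iota all_map; apply: eq_in_all => j.
rewrite mem_iota => ltj /=; rewrite /revf.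
by case: l => /=; congr (_ ==> _); apply/idP/idP; lia.
Qed.

Lemma records_complf n f l x : (forall i, i < n -> f i < n) ->
  records n (complf n f) l x = records n f l (~~ x).
Proof.
move=> frange; apply: eq_in_count => i; rewrite mem_iota => lti.
apply: eq_in_all => j; rewrite mem_iota => ltj /=.
have := frange i; have := frange j; rewrite /complf.
by case: x => /= *; congr (_ ==> _); apply/idP/idP; lia.
Qed.

Lemma pat2413_revf n f : pat2413 n (revf n f) -> pat3142 n f.
Proof.
move=> [i [j [k [l [lij ljk lkl ltl [v1 v2 v3]]]]]].
by exists (n - l.+1), (n - k.+1), (n - j.+1), (n - i.+1); split; try lia.
Qed.

Lemma pat3142_revf n f : pat3142 n (revf n f) -> pat2413 n f.
Proof.
move=> [i [j [k [l [lij ljk lkl ltl [v1 v2 v3]]]]]].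
by exists (n - l.+1), (n - k.+1), (n - j.+1), (n - i.+1); split; try lia.
Qed.

Lemma pat2413_complf n f : (forall i, i < n -> f i < n) ->
  pat2413 n (complf n f) -> pat3142 n f.
Proof.
move=> frange [i [j [k [l [lij ljk lkl ltl [v1 v2 v3]]]]]].
exists i, j, k, l; split=> //; move: v1 v2 v3; rewrite /complf.
by have := frange i; have := frange j; have := frange k; have := frange l; split; lia.
Qed.

Lemma pat3142_complf n f : (forall i, i < n -> f i < n) ->
  pat3142 n (complf n f) -> pat2413 n f.
Proof.
move=> frange [i [j [k [l [lij ljk lkl ltl [v1 v2 v3]]]]]].
exists i, j, k, l; split=> //; move: v1 v2 v3; rewrite /complf.
by have := frange i; have := frange j; have := frange k; have := frange l; split; lia.
Qed.

Lemma sum_cut_revf n f k : k <= n -> sum_cut n (revf n f) k = skew_cut n f (n - k).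
Proof.
move=> lekn; apply/(sum_cutP _ lekn)/(skew_cutP _ (leq_subr k n)) => cut a b *.
- have eb : n - (n - b.+1).+1 = b by lia.
  have ea : n - (n - a.+1).+1 = a by lia.
  by have := cut (n - b.+1) (n - a.+1); rewrite /revf eb ea; lia.
- by have := cut (n - b.+1) (n - a.+1); rewrite /revf; lia.
Qed.

Lemma sum_dec_revf n f : sum_dec n (revf n f) = skew_dec n f.
Proof.
apply/sum_decP/skew_decP => -[k [k0 ltkn cut]]; exists (n - k); split; try lia.
- by rewrite -sum_cut_revf // ltnW.
- by rewrite sum_cut_revf ?leq_subr // subKn // ltnW.
Qed.

Lemma skew_dec_revf n f : skew_dec n (revf n f) = sum_dec n f.
Proof. by rewrite -sum_dec_revf; apply: sum_dec_ext; apply: revfK. Qed.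

Lemma sum_cut_remove_max n f q k :
    inj_below n.+1 f -> q <= n -> (forall i, i <= n -> i != q -> f i < f q) ->
    0 < k -> k < n -> sum_cut n (f \o bump q) k ->
  [\/ sum_dec n.+1 f, skew_dec n.+1 f | pat2413 n.+1 f].
Proof.
move=> finj leqn fmax k0 ltkn /(sum_cutP _ (ltnW ltkn)) /= gcut.
have fbump_lo i : i < q -> f (bump q i) = f i.
  by move=> ltiq; rewrite /bump leqNgt ltiq.
have fbump_hi i : q <= i -> f (bump q i) = f i.+1.
  by move=> leqi; rewrite /bump leqi add1n.
have [lekq | ltqk] := leqP k q.
  apply: Or31; apply/sum_decP; exists k; split; try lia.
  apply/sum_cutP; first lia; move=> a b ltak lekb ltb.
  have ltaq : a < q by lia.
  case: (ltngtP b q) => [ltbq | ltqb | ->]; last by apply: fmax; lia.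
  - by have := gcut a b ltak lekb; rewrite !fbump_lo //; lia.
  - by have := gcut a b.-1 ltak; rewrite fbump_lo // fbump_hi ?prednK; lia.
have [q0 | q_gt0] := posnP q.
  apply: Or32; apply/skew_decP; exists 1; split; try lia.
  apply/skew_cutP; first lia; move=> a b lta1 le1b ltb.
  by rewrite (_ : a = q); [apply: fmax|]; lia.
have [cutq | /sum_cutN [a [b [ltaq leqb ltb lefba]]]] := boolP (sum_cut n.+1 f q).
  by apply: Or31; apply/sum_decP; exists q; split; try lia.
have neqbq : b != q by apply/eqP=> ebq; have := fmax a; rewrite -ebq; lia.
have ltfba : f b < f a.
  rewrite ltn_neqAle lefba andbT; apply/eqP => /finj; lia.
have lebk : b <= k.
  rewrite leqNgt; apply/negP => ltkb.
  by have := gcut a b.-1; rewrite fbump_lo // fbump_hi ?prednK; lia.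
apply: Or33; exists a, q, b, k.+1; split; try lia; split=> //.
- by have := gcut a k; rewrite fbump_lo // fbump_hi; lia.
- by apply: fmax; lia.
Qed.

Lemma revf_bump n f q : q <= n ->
  eqfun_below n (revf n (f \o bump q)) (revf n.+1 f \o bump (n - q)).
Proof. by move=> leqn i lti; rewrite /revf /=; congr f; rewrite /bump; lia. Qed.

(* The mirror image of [sum_cut_remove_max] under reversal. *)
Lemma skew_cut_remove_max n f q k :
    inj_below n.+1 f -> q <= n -> (forall i, i <= n -> i != q -> f i < f q) ->
    0 < k -> k < n -> skew_cut n (f \o bump q) k ->
  [\/ sum_dec n.+1 f, skew_dec n.+1 f | pat3142 n.+1 f].
Proof.
move=> finj leqn fmax k0 ltkn cut.
have rinj : inj_below n.+1 (revf n.+1 f).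
  by move=> i j lti ltj /finj; rewrite /revf; lia.
have rmax i : i <= n -> i != n - q -> revf n.+1 f i < revf n.+1 f (n - q).
  by move=> lein neqi; rewrite /revf !subSS subKn // fmax; lia.
have rcut : sum_cut n (revf n.+1 f \o bump (n - q)) (n - k).
  by rewrite -(sum_cut_ext _ (revf_bump f leqn)) sum_cut_revf ?leq_subr // subKn // ltnW.
have k'0 : 0 < n - k by lia.
have ltk'n : n - k < n by lia.
case: (sum_cut_remove_max rinj (leq_subr q n) rmax k'0 ltk'n rcut).
- by rewrite sum_dec_revf => ?; apply: Or32.
- by rewrite skew_dec_revf => ?; apply: Or31.
- by move/pat2413_revf => ?; apply: Or33.
Qed.

Lemma exists_strict_max n f : inj_below n.+1 f ->
  exists2 q, q <= n & forall i, i <= n -> i != q -> f i < f q.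
Proof.
move=> finj; have [q _ qmax] := @arg_maxnP _ (@ord0 n) xpredT (fun i => f i) isT.
exists q => [|i lein neqiq]; first by rewrite -ltnS.
have /= lefiq := qmax (Ordinal (lein : i < n.+1)) isT.
rewrite ltn_neqAle lefiq andbT; apply: contra neqiq => /eqP /finj.
by move=> /(_ lein (ltn_ord q)) ->.
Qed.

Lemma sum_or_skew_dec n f : 1 < n -> inj_below n f ->
  ~ pat2413 n f -> ~ pat3142 n f -> sum_dec n f || skew_dec n f.
Proof.
elim: n f => [//|n IHn] f lt1n finj no2413 no3142.
have [n1 | lt1n'] : n = 1 \/ 1 < n by lia.
  subst n; case: (ltngtP (f 0) (f 1)) => [lt01 | lt10 | /finj]; last by lia.
  - apply/orP; left; apply/sum_decP; exists 1; split=> //.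
    apply/sum_cutP => // a b *.
    have -> : a = 0 by lia.
    by have -> : b = 1 by lia.
  - apply/orP; right; apply/skew_decP; exists 1; split=> //.
    apply/skew_cutP => // a b *.
    have -> : a = 0 by lia.
    by have -> : b = 1 by lia.
have [q leqn fmax] := exists_strict_max finj.
have bump_mono i j : i < j -> j < n -> bump q i < bump q j by rewrite /bump; lia.
have bump_range i : i < n -> bump q i < n.+1 by rewrite /bump; lia.
have ginj : inj_below n (f \o bump q).
  by move=> i j lti ltj /= /finj; rewrite /bump; lia.
have no2413g : ~ pat2413 n (f \o bump q).
  by move/(pat2413_embed bump_mono bump_range (fun _ _ _ _ => erefl)).
have no3142g : ~ pat3142 n (f \o bump q).
  by move/(pat3142_embed bump_mono bump_range (fun _ _ _ _ => erefl)).
case/orP: (IHn _ lt1n' ginj no2413g no3142g) => [/sum_decP | /skew_decP].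
- move=> [k [k0 ltkn cut]].
  by case: (sum_cut_remove_max finj leqn fmax k0 ltkn cut) => [->|->|//]; rewrite ?orbT.
- move=> [k [k0 ltkn cut]].
  by case: (skew_cut_remove_max finj leqn fmax k0 ltkn cut) => [->|->|//]; rewrite ?orbT.
Qed.

Lemma all_const (b : bool) (s : seq nat) : s != [::] -> all (fun _ => b) s = b.
Proof. by case: s => // x s _ /=; case: b; rewrite ?all_predT. Qed.

Lemma count_andl (b : bool) (P : pred nat) s :
  count (fun i => b && P i) s = if b then count P s else 0.
Proof. by case: b; rewrite ?count_pred0. Qed.

Definition dsum k f g := fun i => if i < k then f i else k + g (i - k).

Lemma dsum_lo k f g i : i < k -> dsum k f g i = f i.
Proof. by rewrite /dsum => ->. Qed.

Lemma dsum_hi k f g i : k <= i -> dsum k f g i = k + g (i - k).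
Proof. by rewrite /dsum ltnNge => ->. Qed.

Lemma records_dsum k m f g l x : 0 < k -> 0 < m -> (forall i, i < k -> f i < k) ->
  records (k + m) (dsum k f g) l x =
  (if l || ~~ x then records k f l x else 0) + (if ~~ l || x then records m g l x else 0).
Proof.
move=> k0 m0 frange; rewrite /records iotaD count_cat add0n; congr (_ + _).
  rewrite -count_andl; apply: eq_in_count => i; rewrite mem_iota => lti /=.
  rewrite all_cat [RHS]andbC; congr andb.
    apply: eq_in_all => j; rewrite mem_iota => ltj /=.
    by rewrite !dsum_lo //; lia.
  rewrite -(all_const (l || ~~ x) (s := iota k m)); last by case: (m) m0.
  apply: eq_in_all => j; rewrite mem_iota => ltj /=.
  have [ltik lekj] : i < k /\ k <= j by lia.
  rewrite (dsum_lo _ _ ltik) (dsum_hi _ _ lekj).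
  by have := frange i; case: l; case: x => /=; lia.
have -> : iota k m = map (addn k) (iota 0 m) by rewrite -iotaDl addn0.
rewrite count_map -count_andl.
apply: eq_in_count => i; rewrite mem_iota => lti /=.
rewrite all_cat; congr andb.
  rewrite -(all_const (~~ l || x) (s := iota 0 k)); last by case: (k) k0.
  apply: eq_in_all => j; rewrite mem_iota => ltj /=.
  rewrite (dsum_hi _ _ (leq_addr i k)) (dsum_lo _ _ ltj) addKn.
  by have := frange j; case: l; case: x => /=; lia.
rewrite all_map; apply: eq_in_all => j; rewrite mem_iota => ltj /=.
rewrite !dsum_hi ?leq_addr // !(addnC k) !addnK ltn_add2r.
by case: l; case: x; rewrite ?ltn_add2r.
Qed.

Lemma sum_cut_dsum k m f g : (forall i, i < k -> f i < k) ->
  sum_cut (k + m) (dsum k f g) k.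
Proof.
move=> frange; apply/sum_cutP; first lia.
by move=> a b ltak lekb _; rewrite dsum_lo // dsum_hi //; have := frange a ltak; lia.
Qed.

Lemma sum_cut_dsumr k m f g j : (forall i, i < k -> f i < k) -> j <= m ->
  sum_cut m g j -> sum_cut (k + m) (dsum k f g) (k + j).
Proof.
move=> frange lejm /(sum_cutP g lejm) gcut; apply/sum_cutP; first lia.
move=> a b lta leb ltb; rewrite (dsum_hi _ _ (_ : k <= b)); last lia.
have [ltak | leka] := ltnP a k.
  by rewrite dsum_lo //; have := frange a ltak; lia.
by rewrite dsum_hi // ltn_add2l; apply: gcut; lia.
Qed.

Lemma sum_cut_dsumr_inv k m f g j : k < j -> j < k + m ->
  sum_cut (k + m) (dsum k f g) j -> sum_cut m g (j - k).
Proof.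
move=> ltkj ltj /(sum_cutP _ (ltnW ltj)) cut; apply/sum_cutP; first lia.
move=> a b lta leb ltb; have := cut (k + a) (k + b).
by rewrite !dsum_hi ?leq_addr // !addKn !ltn_add2l; apply; lia.
Qed.

Definition upper_block k h := fun i => h (k + i) - k.

Lemma dsum_upper_block k m h : (forall i, k <= i -> i < k + m -> k <= h i) ->
  eqfun_below (k + m) h (dsum k h (upper_block k h)).
Proof.
move=> hrange i lti; rewrite /dsum /upper_block.
case: ltnP => // leki; rewrite (subnKC leki); have := hrange i leki lti; lia.
Qed.

Lemma pat2413_dsum k m f g : (forall i, i < k -> f i < k) ->
  ~ pat2413 k f -> ~ pat2413 m g -> ~ pat2413 (k + m) (dsum k f g).
Proof.
move=> frange nof nog [i [j [l [o [lij ljl llo lto [v1 v2 v3]]]]]].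
have [ltok | leko] := ltnP o k.
  by apply: nof; exists i, j, l, o; split=> //; rewrite -!(@dsum_lo k f g) //; lia.
have [leki | ltik] := leqP k i.
  apply: nog; exists (i - k), (j - k), (l - k), (o - k); split; try lia.
  by move: v1 v2 v3; rewrite !dsum_hi; try lia; split; lia.
move: v1 v2 v3; rewrite (dsum_lo _ _ ltik) (dsum_hi _ _ leko).
have [ltlk | lekl] := ltnP l k.
  by rewrite (dsum_lo _ _ ltlk) (dsum_lo _ _ (ltn_trans ljl ltlk)); have := frange j; lia.
by rewrite (dsum_hi _ _ lekl); have := frange i; lia.
Qed.

Lemma pat3142_dsum k m f g : (forall i, i < k -> f i < k) ->
  ~ pat3142 k f -> ~ pat3142 m g -> ~ pat3142 (k + m) (dsum k f g).
Proof.
move=> frange nof nog [i [j [l [o [lij ljl llo lto [v1 v2 v3]]]]]].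
have [ltok | leko] := ltnP o k.
  by apply: nof; exists i, j, l, o; split=> //; rewrite -!(@dsum_lo k f g) //; lia.
have [leki | ltik] := leqP k i.
  apply: nog; exists (i - k), (j - k), (l - k), (o - k); split; try lia.
  by move: v1 v2 v3; rewrite !dsum_hi; try lia; split; lia.
by move: v1 v2 v3; rewrite (dsum_lo _ _ ltik) (dsum_hi _ _ leko); have := frange i; lia.
Qed.

Lemma pat2413_take k m h : ~ pat2413 (k + m) h -> ~ pat2413 k h.
Proof.
by move=> noh p; apply/noh/(pat2413_embed (e := id) _ _ _ p) => //= i lti; lia.
Qed.

Lemma pat3142_take k m h : ~ pat3142 (k + m) h -> ~ pat3142 k h.
Proof.
by move=> noh p; apply/noh/(pat3142_embed (e := id) _ _ _ p) => //= i lti; lia.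
Qed.

Lemma pat2413_upper_block k m h : (forall i, k <= i -> i < k + m -> k <= h i) ->
  ~ pat2413 (k + m) h -> ~ pat2413 m (upper_block k h).
Proof.
move=> hrange noh p; apply/noh/(pat2413_embed (e := addn k) _ _ _ p)
  => [i j|i|i j lti ltj].
- by rewrite ltn_add2l.
- by rewrite ltn_add2l.
- by rewrite /upper_block; have := hrange (k + i); have := hrange (k + j); lia.
Qed.

Lemma pat3142_upper_block k m h : (forall i, k <= i -> i < k + m -> k <= h i) ->
  ~ pat3142 (k + m) h -> ~ pat3142 m (upper_block k h).
Proof.
move=> hrange noh p; apply/noh/(pat3142_embed (e := addn k) _ _ _ p)
  => [i j|i|i j lti ltj].
- by rewrite ltn_add2l.
- by rewrite ltn_add2l.
- by rewrite /upper_block; have := hrange (k + i); have := hrange (k + j); lia.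
Qed.

Definition last_sum_cut n f k :=
  [&& 0 < k, k < n, sum_cut n f k
    & all (fun j => ~~ sum_cut n f j) (iota k.+1 (n - k.+1))].

Lemma last_sum_cut_ext n f g k :
  eqfun_below n f g -> last_sum_cut n f k = last_sum_cut n g k.
Proof.
move=> efg; rewrite /last_sum_cut (sum_cut_ext k efg); congr [&& _, _, _ & _].
by apply: eq_all => j; rewrite /= (sum_cut_ext j efg).
Qed.

Lemma last_sum_cut_sum_dec n f k : last_sum_cut n f k -> sum_dec n f.
Proof. by case/and4P => k0 ltkn cut _; apply/sum_decP; exists k. Qed.

Lemma last_sum_cut_uniq n f k1 k2 :
  last_sum_cut n f k1 -> last_sum_cut n f k2 -> k1 = k2.
Proof.
wlog lek12 : k1 k2 / k1 <= k2.
  by move=> wlog_le c1 c2; case: (leqP k1 k2) => [|/ltnW] le; [|symmetry];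
     apply: wlog_le.
move=> /and4P[_ _ _ /allP later] /and4P[_ ltk2 cut2 _].
case: (ltngtP k1 k2) => // ltk12; last lia.
have k2_later : k2 \in iota k1.+1 (n - k1.+1) by rewrite mem_iota; lia.
by have := later k2 k2_later; rewrite cut2.
Qed.

Lemma exists_last_sum_cut n f : sum_dec n f -> exists k, last_sum_cut n f k.
Proof.
move=> /sum_decP cuts.
have ex_cut : exists j, [&& 0 < j, j < n & sum_cut n f j].
  by case: cuts => j [j0 ltjn cut]; exists j; rewrite j0 ltjn cut.
have [|k /and3P[k0 ltkn cut] kmax] := ex_maxnP ex_cut (m := n).
  by move=> j /and3P[_ ltjn _]; apply: ltnW.
exists k; apply/and4P; split=> //; apply/allP => j; rewrite mem_iota => ltkj.
by apply/negP => cutj; have := kmax j; rewrite cutj; lia.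
Qed.

Lemma last_sum_cut_dsum k m f g : 0 < k -> 0 < m -> (forall i, i < k -> f i < k) ->
  ~~ sum_dec m g -> last_sum_cut (k + m) (dsum k f g) k.
Proof.
move=> k0 m0 frange nog; apply/and4P; split=> //; first lia.
  exact: sum_cut_dsum.
apply/allP => j; rewrite mem_iota => ltj; apply: contra nog => cut.
by apply/sum_decP; exists (j - k); split; try lia; apply: sum_cut_dsumr_inv cut; lia.
Qed.

Lemma last_sum_cut_upper_block k m h : (forall i, i < k -> h i < k) ->
    (forall i, k <= i -> i < k + m -> k <= h i) ->
  last_sum_cut (k + m) h k -> ~~ sum_dec m (upper_block k h).
Proof.
move=> lo hi /and4P[_ _ _ /allP later]; apply/negP => /sum_decP[j [j0 ltjm cut]].
have kj_later : k + j \in iota k.+1 (k + m - k.+1) by rewrite mem_iota; lia.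
have /negP[] := later _ kj_later.
by rewrite (sum_cut_ext _ (dsum_upper_block hi)); apply: sum_cut_dsumr lo _ _; lia.
Qed.

End Sequences.

(** * Permutations *)

Section Permutations.

Definition pfun n (p : 'S_n) : nat -> nat :=
  fun i => if insub i is Some j then val (p j) else 0.

Lemma pfunE n (p : 'S_n) (j : 'I_n) : pfun p j = p j.
Proof. by rewrite /pfun valK. Qed.

Lemma pfunE_lt n (p : 'S_n) i (lti : i < n) : pfun p i = p (Ordinal lti).
Proof. by rewrite /pfun insubT. Qed.

Lemma pfun_lt n (p : 'S_n) i : i < n -> pfun p i < n.
Proof. by move=> lti; rewrite (pfunE_lt p lti). Qed.

Lemma pfun_inj n (p : 'S_n) : inj_below n (pfun p).
Proof.
move=> i j lti ltj; rewrite (pfunE_lt p lti) (pfunE_lt p ltj).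
by move=> /val_inj /perm_inj [].
Qed.

Lemma eq_perm_pfun n (p q : 'S_n) : eqfun_below n (pfun p) (pfun q) -> p = q.
Proof. by move=> epq; apply/permP => i; apply: ord_inj; rewrite -!pfunE epq. Qed.

Lemma card_ord_count n (P : pred 'I_n) (Q : pred nat) :
  (forall i : 'I_n, P i = Q i) -> #|[set i | P i]| = count Q (iota 0 n).
Proof.
move=> ePQ; rewrite cardsE cardE /enum_mem size_filter -enumT -val_enum_ord.
by rewrite count_map; apply: eq_count => i /=; rewrite -ePQ.
Qed.

Lemma forall_ord_all n (A : pred 'I_n) (B : pred nat) :
  (forall j : 'I_n, A j = B j) -> [forall j, A j] = all B (iota 0 n).
Proof.
move=> eAB; apply/forallP/allP => [allA j | allB j].
- by rewrite mem_iota add0n => ltj; rewrite -(eAB (Ordinal ltj)).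
- by rewrite eAB; apply: allB; rewrite mem_iota /=.
Qed.

Section Statistics.
Variables (n : nat) (p : 'S_n).

Lemma lmaxE : lmax p = records n (pfun p) true true.
Proof. by apply: card_ord_count => i; apply: forall_ord_all => j; rewrite !pfunE. Qed.
Lemma rmaxE : rmax p = records n (pfun p) false true.
Proof. by apply: card_ord_count => i; apply: forall_ord_all => j; rewrite !pfunE. Qed.
Lemma lminE : lmin p = records n (pfun p) true false.
Proof. by apply: card_ord_count => i; apply: forall_ord_all => j; rewrite !pfunE. Qed.
Lemma rminE : rmin p = records n (pfun p) false false.
Proof. by apply: card_ord_count => i; apply: forall_ord_all => j; rewrite !pfunE. Qed.

Lemma contains2413P : reflect (pat2413 n (pfun p)) (contains2413 p).
Proof.
apply: (iffP idP).
  case/existsP => i /existsP[j /existsP[k /existsP[l]]].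
  by case/and5P => ? ? ? ? /andP[? ?]; exists i, j, k, l; rewrite !pfunE.
case=> i [j [k [l [lij ljk lkl ltl [v1 v2 v3]]]]].
have [lti ltj ltk] : [/\ i < n, j < n & k < n] by split; lia.
apply/existsP; exists (Ordinal lti); apply/existsP; exists (Ordinal ltj).
apply/existsP; exists (Ordinal ltk); apply/existsP; exists (Ordinal ltl).
by move: v1 v2 v3; rewrite !(pfunE_lt p) /= => -> -> ->; rewrite lij ljk lkl.
Qed.

Lemma contains3142P : reflect (pat3142 n (pfun p)) (contains3142 p).
Proof.
apply: (iffP idP).
  case/existsP => i /existsP[j /existsP[k /existsP[l]]].
  by case/and5P => ? ? ? ? /andP[? ?]; exists i, j, k, l; rewrite !pfunE.
case=> i [j [k [l [lij ljk lkl ltl [v1 v2 v3]]]]].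
have [lti ltj ltk] : [/\ i < n, j < n & k < n] by split; lia.
apply/existsP; exists (Ordinal lti); apply/existsP; exists (Ordinal ltj).
apply/existsP; exists (Ordinal ltk); apply/existsP; exists (Ordinal ltl).
by move: v1 v2 v3; rewrite !(pfunE_lt p) /= => -> -> ->; rewrite lij ljk lkl.
Qed.

Lemma separableP :
  separable p <-> [/\ 0 < n, ~ pat2413 n (pfun p) & ~ pat3142 n (pfun p)].
Proof.
rewrite /separable; split.
  by case/and3P => n0 /contains2413P no2413 /contains3142P no3142.
by case=> n0 /(introN contains2413P) -> /(introN contains3142P) ->; rewrite n0.
Qed.

Lemma split_point_sum_dec :
  [exists k : 'I_n, (0 < k) && [forall a : 'I_n, forall b : 'I_n,
     ((a < k) && (k <= b)) ==> (p a < p b)]] = sum_dec n (pfun p).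
Proof.
apply/idP/sum_decP.
  case/existsP => k /andP[k0 /forallP splitk]; exists k; split=> //.
  apply/sum_cutP => [|a b ltak lekb ltbn]; first exact: ltnW.
  have lta : a < n by lia.
  have /forallP/(_ (Ordinal ltbn)) := splitk (Ordinal lta).
  by rewrite /= ltak lekb !(pfunE_lt p).
case=> k [k0 ltkn /(sum_cutP _ (ltnW ltkn)) cut]; apply/existsP.
exists (Ordinal ltkn); rewrite k0; apply/forallP => a; apply/forallP => b.
by apply/implyP => /andP[ltak lekb]; have := cut a b ltak lekb (ltn_ord b); rewrite !pfunE.
Qed.

Lemma reducibleE : reducible p = sum_dec n (pfun p).
Proof.
rewrite /reducible /irreducible split_point_sum_dec.
case: (ltnP 1 n) => [lt1n | len1].
  by rewrite gtn_eqF //= negbK.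
by apply/esym/negbTE/negP => /sum_decP[k [k0 ltkn _]]; lia.
Qed.

Lemma irreducibleE : irreducible p = (n == 1) || (1 < n) && ~~ sum_dec n (pfun p).
Proof. by rewrite /irreducible split_point_sum_dec. Qed.

End Statistics.

(* [(s * t) i = t (s i)] in [perm], so [rev_perm n * p] reverses the positions
   of [p] and [p * rev_perm n] complements its values. *)
Definition rev_perm n : 'S_n := perm (@rev_ord_inj n).

Lemma rev_permK n : (rev_perm n * rev_perm n = 1)%g.
Proof. by apply/permP => i; rewrite permM !permE rev_ordK. Qed.

Lemma pfun_rev n (p : 'S_n) :
  eqfun_below n (pfun (rev_perm n * p)%g) (revf n (pfun p)).
Proof.
move=> i lti; rewrite (pfunE_lt _ lti) permM permE /revf.
have ltni : n - i.+1 < n by lia.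
by rewrite (pfunE_lt _ ltni); do 2 f_equal; apply: val_inj.
Qed.

Lemma pfun_compl n (p : 'S_n) :
  eqfun_below n (pfun (p * rev_perm n)%g) (complf n (pfun p)).
Proof.
by move=> i lti; rewrite (pfunE_lt _ lti) permM permE /complf /= (pfunE_lt _ lti).
Qed.

Lemma separable_rev n (p : 'S_n) : separable (rev_perm n * p)%g = separable p.
Proof.
suff sep_rev q : separable q -> separable (rev_perm n * q)%g.
  by apply/idP/idP => [/sep_rev|/sep_rev//]; rewrite mulgA rev_permK mul1g.
move=> /separableP[n0 no2413 no3142]; apply/separableP; split=> // pat.
- exact/no3142/pat2413_revf/(pat2413_ext (pfun_rev q)).
- exact/no2413/pat3142_revf/(pat3142_ext (pfun_rev q)).
Qed.

Lemma separable_compl n (p : 'S_n) : separable (p * rev_perm n)%g = separable p.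
Proof.
suff sep_compl q : separable q -> separable (q * rev_perm n)%g.
  by apply/idP/idP => [/sep_compl|/sep_compl//]; rewrite -mulgA rev_permK mulg1.
move=> /separableP[n0 no2413 no3142]; apply/separableP; split=> // pat.
- exact/no3142/(pat2413_complf (@pfun_lt n q))/(pat2413_ext (pfun_compl q)).
- exact/no2413/(pat3142_complf (@pfun_lt n q))/(pat3142_ext (pfun_compl q)).
Qed.

Lemma sum_dec_rev_perm n (p : 'S_n) :
  sum_dec n (pfun (rev_perm n * p)%g) = skew_dec n (pfun p).
Proof. by rewrite (sum_dec_ext (pfun_rev p)) sum_dec_revf. Qed.

End Permutations.

Section DirectSum.

Lemma count_lt_iota t n : count (fun z => z < t) (iota 0 n) = minn t n.
Proof.
elim: n => [|n IHn]; first by rewrite minn0.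
by rewrite -addn1 iotaD count_cat IHn /=; case: (ltnP n t); lia.
Qed.

(* The [(pfun p i).+1] positions with values [<= pfun p i] all lie before [k]. *)
Lemma sum_cut_perm_lo n (p : 'S_n) k : k <= n -> sum_cut n (pfun p) k ->
  forall i, i < k -> pfun p i < k.
Proof.
move=> lekn /(sum_cutP _ lekn) cut i ltik.
have below_k : p @^-1: [set z : 'I_n | z <= pfun p i] \subset [set z : 'I_n | z < k].
  apply/subsetP => z; rewrite !inE -pfunE => lezi; rewrite ltnNge; apply/negP => lekz.
  by have := cut i z ltik lekz (ltn_ord z); lia.
have := subset_leq_card below_k; rewrite card_preimset; last exact: perm_inj.
rewrite (@card_ord_count n _ (fun z => z < (pfun p i).+1)) //.
rewrite (@card_ord_count n _ (fun z => z < k)) // !count_lt_iota.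
by have := @pfun_lt n p i; lia.
Qed.

Lemma sum_cut_perm_hi n (p : 'S_n) k : k <= n -> sum_cut n (pfun p) k ->
  forall i, k <= i -> i < n -> k <= pfun p i.
Proof.
move=> lekn /(sum_cutP _ lekn) cut i leki ltin.
have above_k : p @^-1: [set z : 'I_n | pfun p i <= z] \subset [set z : 'I_n | k <= z].
  apply/subsetP => z; rewrite !inE -pfunE => leiz; rewrite leqNgt; apply/negP => ltzk.
  by have := cut z i ltzk leki ltin; lia.
have count_ge t : count (fun z => t <= z) (iota 0 n) = n - minn t n.
  have -> : count (fun z => t <= z) (iota 0 n) = count (predC (gtn t)) (iota 0 n).
    by apply: eq_count => z /=; rewrite leqNgt.
  by have := count_predC (gtn t) (iota 0 n); rewrite count_lt_iota size_iota; lia.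
have := subset_leq_card above_k; rewrite card_preimset; last exact: perm_inj.
rewrite (@card_ord_count n _ (fun z => pfun p i <= z)) //.
by rewrite (@card_ord_count n _ (fun z => k <= z)) // !count_ge; have := @pfun_lt n p i; lia.
Qed.

Variables (k m : nat).

Definition perm_dsum_fun (a : 'S_k) (b : 'S_m) (i : 'I_(k + m)) : 'I_(k + m) :=
  match split i with inl j => lshift m (a j) | inr j => rshift k (b j) end.

Lemma perm_dsum_funE (a : 'S_k) (b : 'S_m) (i : 'I_(k + m)) :
  val (perm_dsum_fun a b i) = dsum k (pfun a) (pfun b) i.
Proof.
rewrite /perm_dsum_fun /dsum; case: splitP => j -> /=; first by rewrite pfunE.
by rewrite addKn pfunE.
Qed.

Lemma perm_dsum_inj (a : 'S_k) (b : 'S_m) : injective (perm_dsum_fun a b).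
Proof.
move=> i1 i2 /(congr1 val); rewrite !perm_dsum_funE /dsum => e12; apply: val_inj.
move: e12; case: (ltnP i1 k) => lt1; case: (ltnP i2 k) => lt2.
- by rewrite !(pfunE_lt _ lt1) !(pfunE_lt _ lt2) => /val_inj /perm_inj [].
- by have := pfun_lt a lt1; lia.
- by have := pfun_lt a lt2; lia.
have lt1m : i1 - k < m by have := ltn_ord i1; lia.
have lt2m : i2 - k < m by have := ltn_ord i2; lia.
move/eqP; rewrite eqn_add2l (pfunE_lt _ lt1m) (pfunE_lt _ lt2m).
by move=> /eqP /val_inj /perm_inj [] /=; lia.
Qed.

Definition perm_dsum (a : 'S_k) (b : 'S_m) : 'S_(k + m) := perm (@perm_dsum_inj a b).

Lemma pfun_perm_dsum (a : 'S_k) (b : 'S_m) :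
  eqfun_below (k + m) (pfun (perm_dsum a b)) (dsum k (pfun a) (pfun b)).
Proof. by move=> i lti; rewrite (pfunE_lt _ lti) permE perm_dsum_funE. Qed.

Lemma perm_dsum_pair_inj : injective (fun ab : 'S_k * 'S_m => perm_dsum ab.1 ab.2).
Proof.
move=> [a1 b1] [a2 b2] /= e12.
have e1 := pfun_perm_dsum a1 b1; have e2 := pfun_perm_dsum a2 b2; rewrite e12 in e1.
have -> : a1 = a2.
  apply: eq_perm_pfun => i lti; have ltik : i < k + m by lia.
  by have := e1 i ltik; rewrite e2 // !dsum_lo.
have -> // : b1 = b2.
apply: eq_perm_pfun => i lti; have ltik : k + i < k + m by lia.
by have := e1 _ ltik; rewrite e2 // !dsum_hi ?leq_addr // !addKn => /addnI.
Qed.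

Lemma sum_cut_perm_dsum (p : 'S_(k + m)) : sum_cut (k + m) (pfun p) k ->
  exists a b, [/\ p = perm_dsum a b, eqfun_below k (pfun a) (pfun p)
                & eqfun_below m (pfun b) (upper_block k (pfun p))].
Proof.
move=> cut.
have lo := sum_cut_perm_lo (leq_addr m k) cut.
have hi := sum_cut_perm_hi (leq_addr m k) cut.
pose fa (j : 'I_k) : 'I_k := Ordinal (lo j (ltn_ord j)).
have fa_inj : injective fa.
  move=> j1 j2 /(congr1 val) /= /pfun_inj e12; apply: val_inj.
  by apply: e12; have := ltn_ord j1; have := ltn_ord j2; lia.
have upper_lt (j : 'I_m) : upper_block k (pfun p) j < m.
  have ltkj : k + j < k + m by rewrite ltn_add2l.
  by rewrite /upper_block; have := pfun_lt p ltkj; lia.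
pose fb (j : 'I_m) : 'I_m := Ordinal (upper_lt j).
have fb_inj : injective fb.
  move=> j1 j2 /(congr1 val); rewrite /= /upper_block => e12; apply: ord_inj.
  have [lt1 lt2] : k + j1 < k + m /\ k + j2 < k + m by rewrite !ltn_add2l.
  have : pfun p (k + j1) = pfun p (k + j2).
    by have := hi _ (leq_addr j1 k) lt1; have := hi _ (leq_addr j2 k) lt2; lia.
  by move/pfun_inj => /(_ lt1 lt2); lia.
have ea : eqfun_below k (pfun (perm fa_inj)) (pfun p).
  by move=> i lti; rewrite (pfunE_lt _ lti) permE.
have eb : eqfun_below m (pfun (perm fb_inj)) (upper_block k (pfun p)).
  by move=> i lti; rewrite (pfunE_lt _ lti) permE.
exists (perm fa_inj), (perm fb_inj); split=> //; apply: eq_perm_pfun => i lti.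
rewrite pfun_perm_dsum // (dsum_upper_block hi lti) /dsum.
by case: ifP => [/ea | /negbT]; rewrite // -leqNgt => leki; rewrite eb //; lia.
Qed.

End DirectSum.

(** * Generating functions *)

Section GeneratingFunctions.
Variable R : comRingType.

Local Open Scope ring_scope.

Lemma comRing_ring_theory :
  @ring_theory (GRing.PzSemiRing.sort R) 0 1 +%R *%R (fun x y => x - y) -%R (@eq R).
Proof.
split=> //=; [exact: add0r | exact: addrC | exact: addrA | exact: mul1r
  | exact: mulrC | exact: mulrA | exact: mulrDl | exact: subrr].
Qed.

Add Ring R_ring : comRing_ring_theory.

Implicit Types (a b c d : R).

Definition skew_gf a b c d : nat -> R :=
  fun n => \sum_(p : 'S_n | separable p && skew_dec n (pfun p)) weight p a b c d.

Lemma weightE n (p : 'S_n) a b c d : weight p a b c d =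
  a ^+ records n (pfun p) true true * b ^+ records n (pfun p) false true *
  c ^+ records n (pfun p) true false * d ^+ records n (pfun p) false false.
Proof. by rewrite /weight lmaxE rmaxE lminE rminE. Qed.

Lemma weight_rev n (p : 'S_n) a b c d :
  weight (rev_perm n * p)%g a b c d = weight p b a d c.
Proof. by rewrite !weightE !(records_ext _ _ (pfun_rev p)) !records_revf /=; ring. Qed.

Lemma weight_compl n (p : 'S_n) a b c d :
  weight (p * rev_perm n)%g a b c d = weight p c d a b.
Proof.
rewrite !weightE !(records_ext _ _ (pfun_compl p)).
by rewrite !(records_complf _ _ (@pfun_lt n p)) /=; ring.
Qed.

Lemma Sgf_rev a b c d : Sgf a b c d = Sgf b a d c.
Proof.
apply: functional_extensionality => n.
rewrite /Sgf (reindex_inj (mulgI (rev_perm n))) /=.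
by apply: eq_big => p; rewrite ?separable_rev // => _; rewrite weight_rev.
Qed.

Lemma Sgf_compl a b c d : Sgf a b c d = Sgf c d a b.
Proof.
apply: functional_extensionality => n.
rewrite /Sgf (reindex_inj (mulIg (rev_perm n))) /=.
by apply: eq_big => p; rewrite ?separable_compl // => _; rewrite weight_compl.
Qed.

Lemma Rgf_skew_gf a b c d : Rgf a b c d = skew_gf b a d c.
Proof.
apply: functional_extensionality => n.
rewrite /Rgf /skew_gf (reindex_inj (mulgI (rev_perm n))) /=.
apply: eq_big => [p | p _]; last by rewrite weight_rev.
by rewrite separable_rev reducibleE sum_dec_rev_perm.
Qed.

Lemma weight_perm1 (p : 'S_1) a b c d : weight p a b c d = a * b * c * d.
Proof. by rewrite weightE /records /=; rewrite !expr1. Qed.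

Lemma separable_perm1 (p : 'S_1) : separable p.
Proof. by apply/separableP; split=> // -[i [j [k [l [? ? ? ? _]]]]]; lia. Qed.

Lemma sum_perm1 (P : pred 'S_1) a b c d :
  (forall p, P p) -> \sum_(p | P p) weight p a b c d = a * b * c * d.
Proof.
move=> allP; rewrite (eq_bigl predT) // (eq_bigr (fun _ => a * b * c * d)).
  by rewrite sumr_const card_Sn.
by move=> p _; apply: weight_perm1.
Qed.

Lemma separable_skew_dec n (p : 'S_n) : (1 < n)%N -> separable p ->
  ~~ sum_dec n (pfun p) = skew_dec n (pfun p).
Proof.
move=> lt1n /separableP[_ no2413 no3142].
have := sum_or_skew_dec lt1n (@pfun_inj n p) no2413 no3142.
case: (boolP (sum_dec _ _)) => [sdec _ | _ /= -> //].
by apply/esym/negP => /(sum_skew_dec_exclusive sdec).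
Qed.

Lemma Sgf_split a b c d : Sgf a b c d =
  fps_add (fps_mono (a * b * c * d) 1) (fps_add (Rgf a b c d) (skew_gf a b c d)).
Proof.
apply: functional_extensionality => -[|[|n]]; rewrite /fps_add /fps_mono /=.
- by rewrite /Sgf /Rgf /skew_gf !big_pred0 // !addr0.
- rewrite /Sgf /Rgf /skew_gf sum_perm1; last exact: separable_perm1.
  by rewrite !big_pred0 ?addr0 // => p; rewrite ?reducibleE /= andbF.
rewrite add0r /Sgf (bigID (fun p => sum_dec n.+2 (pfun p))) /=; congr (_ + _).
  by apply: eq_bigl => p; rewrite reducibleE.
by apply: eq_bigl => p; case: (boolP (separable p)) => //=; apply: separable_skew_dec.
Qed.

Lemma Igf_split a b c d :
  Igf a b c d = fps_add (fps_mono (a * b * c * d) 1) (skew_gf a b c d).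
Proof.
apply: functional_extensionality => -[|[|n]]; rewrite /fps_add /fps_mono /=.
- by rewrite /Igf /skew_gf !big_pred0 // !addr0.
- rewrite /Igf /skew_gf sum_perm1 => [|p]; last by rewrite separable_perm1 irreducibleE.
  by rewrite !big_pred0 ?addr0 // => p; rewrite andbF.
rewrite add0r /Igf /skew_gf; apply: eq_bigl => p; rewrite irreducibleE /=.
by case: (boolP (separable p)) => //=; apply: separable_skew_dec.
Qed.

Lemma Sgf_IR a b c d : Sgf a b c d = fps_add (Igf a b c d) (Rgf a b c d).
Proof.
apply: functional_extensionality => n; rewrite /fps_add /Sgf /Igf /Rgf.
rewrite (bigID (fun p => irreducible p)) /=; congr (_ + _).
apply: eq_bigl => p; case sep_p: (separable p) => //=.
by rewrite /reducible; case: n p sep_p => [|[|n]] p.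
Qed.

Lemma weight_perm_dsum k m (p : 'S_k) (q : 'S_m) a b c d : (0 < k)%N -> (0 < m)%N ->
  weight (perm_dsum p q) a b c d = weight p a 1 c d * weight q a b 1 d.
Proof.
move=> k0 m0; rewrite !weightE !(records_ext _ _ (pfun_perm_dsum p q)).
have lt_k := @pfun_lt k p.
by rewrite !records_dsum //= !exprD !expr1n !expr0; ring.
Qed.

Lemma Igf_sum_indecomposable m a b d : (0 < m)%N ->
  fps_mono (a * b * d) 1 m + skew_gf a b 1 d m =
  \sum_(q : 'S_m | separable q && ~~ sum_dec m (pfun q)) weight q a b 1 d.
Proof.
case: m => [//|[|m]] _.
  rewrite /skew_gf big_pred0 => [|p]; last by rewrite andbF.
  by rewrite addr0 sum_perm1 ?mulr1 // => p; rewrite separable_perm1.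
rewrite /fps_mono /= add0r /skew_gf; apply: eq_bigl => q.
by case: (boolP (separable q)) => //= sep_q; rewrite separable_skew_dec.
Qed.

Lemma mem_perm_dsum_last_cut k m (p : 'S_(k + m)) : (0 < k)%N -> (0 < m)%N ->
  (p \in [set perm_dsum pq.1 pq.2 | pq in [set pq : 'S_k * 'S_m |
      separable pq.1 && (separable pq.2 && ~~ sum_dec m (pfun pq.2))]])
  = separable p && last_sum_cut (k + m) (pfun p) k.
Proof.
move=> k0 m0; apply/imsetP/andP => [[[p1 p2]] | [/separableP[_ no2413 no3142] last]].
  rewrite inE /= => /and3P[/separableP[_ no2413_1 no3142_1]].
  move=> /separableP[_ no2413_2 no3142_2] indec2 ->.
  have e := pfun_perm_dsum p1 p2; have lt1 := @pfun_lt k p1; split.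
    apply/separableP; split; first by rewrite addn_gt0 k0.
      by move/(pat2413_ext e); apply: pat2413_dsum.
    by move/(pat3142_ext e); apply: pat3142_dsum.
  by rewrite (last_sum_cut_ext _ e); apply: last_sum_cut_dsum.
have cut : sum_cut (k + m) (pfun p) k by case/and4P: last.
have [p1 [p2 [ep e1 e2]]] := sum_cut_perm_dsum cut.
have lo := sum_cut_perm_lo (leq_addr m k) cut.
have hi := sum_cut_perm_hi (leq_addr m k) cut.
exists (p1, p2) => //; rewrite inE /=; apply/and3P; split.
- apply/separableP; split=> // [/(pat2413_ext e1) | /(pat3142_ext e1)].
    exact: pat2413_take no2413.
  exact: pat3142_take no3142.
- apply/separableP; split=> // [/(pat2413_ext e2) | /(pat3142_ext e2)].
    exact: pat2413_upper_block hi no2413.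
  exact: pat3142_upper_block hi no3142.
- by rewrite (sum_dec_ext e2); apply: last_sum_cut_upper_block lo hi _.
Qed.

Lemma sum_last_sum_cut k m a b c d : (0 < k)%N -> (0 < m)%N ->
  \sum_(p : 'S_(k + m) | separable p && last_sum_cut (k + m) (pfun p) k)
     weight p a b c d =
  Sgf a 1 c d k * (fps_mono (a * b * d) 1 m + skew_gf a b 1 d m).
Proof.
move=> k0 m0; rewrite Igf_sum_indecomposable // /Sgf big_distrl /=.
under eq_bigr do rewrite big_distrr /=.
rewrite pair_big /= (eq_bigl (mem [set perm_dsum pq.1 pq.2 | pq in [set pq : 'S_k * 'S_m |
      separable pq.1 && (separable pq.2 && ~~ sum_dec m (pfun pq.2))]]));
  last by move=> p; rewrite inE mem_perm_dsum_last_cut.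
rewrite big_imset /=; last by move=> pq1 pq2 _ _; apply: perm_dsum_pair_inj.
apply: eq_big => [pq | pq _]; first by rewrite inE.
by rewrite weight_perm_dsum.
Qed.

Lemma Rgf_by_last_sum_cut n a b c d : Rgf a b c d n =
  \sum_(k < n.+1) \sum_(p : 'S_n | separable p && last_sum_cut n (pfun p) k)
     weight p a b c d.
Proof.
under [RHS]eq_bigr do rewrite big_mkcond.
rewrite exchange_big /Rgf [LHS]big_mkcond /=; apply: eq_bigr => p _.
case: (boolP (separable p)) => /= [sep_p | _]; last by rewrite big1.
rewrite reducibleE; case: (boolP (sum_dec n (pfun p))) => [dec | nodec]; last first.
  by rewrite big1 // => k _; case: ifP => // /last_sum_cut_sum_dec dec; rewrite dec in nodec.
have [k lastk] := exists_last_sum_cut dec.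
have ltkn : (k < n.+1)%N by case/and4P: lastk; lia.
rewrite (bigD1 (Ordinal ltkn)) //= lastk big1 ?addr0 // => j neqjk.
case: ifP => // /last_sum_cut_uniq /(_ lastk) ejk.
by move: neqjk; rewrite (_ : j = Ordinal ltkn) ?eqxx //; apply: val_inj.
Qed.

Lemma Rgf_factor a b c d : Rgf a b c d =
  fps_mul (Sgf a 1 c d) (fps_add (fps_mono (a * b * d) 1) (skew_gf a b 1 d)).
Proof.
apply: functional_extensionality => n.
rewrite Rgf_by_last_sum_cut /fps_mul /fps_add; apply: eq_bigr => -[k ltkn] _ /=.
have [-> | k0] := posnP k.
  rewrite big_pred0 => [|p]; last by rewrite /last_sum_cut /= andbF.
  by rewrite /Sgf big_pred0 ?mul0r.
have [lenk | ltkn'] := leqP n k.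
  rewrite big_pred0 => [|p]; last by rewrite /last_sum_cut (ltnNge k n) lenk /= !andbF.
  have -> : (n - k = 0)%N by lia.
  by rewrite /fps_mono /skew_gf /= big_pred0 // addr0 mulr0.
move: (n - k)%N (subnKC (ltnW ltkn')) => m ekm; subst n.
by apply: sum_last_sum_cut; lia.
Qed.

Lemma Sgf0 a b c d : Sgf a b c d 0 = 0.
Proof. by rewrite /Sgf big_pred0. Qed.

Lemma skew_gf_factor a b c d : skew_gf a b c d =
  fps_mul (Sgf 1 b c d) (fps_add (fps_mono (b * a * c) 1) (Rgf a b c 1)).
Proof. by rewrite -Rgf_skew_gf Rgf_factor -Rgf_skew_gf Sgf_rev. Qed.

End GeneratingFunctions.

Section Identities.
Variable R : comRingType.
Add Ring fps_ring : (fps_ring_theory R).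
Local Open Scope ring_scope.
Implicit Types (a b c d : R).

Local Notation "f ** g" := (fps_mul f g) (at level 40, left associativity).
Local Notation "f +++ g" := (fps_add f g) (at level 50, left associativity).
Local Notation C := (@fps_const R).

Ltac fps_expand := rewrite ?fps_mono2E ?fps_mono1E ?expr2 ?fps_constM.

(* By [Rgf_factor] and [skew_gf_factor], [t a b + skew_gf a b 1 1],
   [t a + skew_gf a 1 1 1] and [t a c + Rgf a 1 c 1] satisfy linear equations
   with coefficients in the [S_z], which solve to the closed form [Egf]. *)
Lemma Egf_Rgf a b c : Egf a b c = fps_mono (a * b * c) 1 +++ Rgf a b c 1.
Proof.
pose sa := Sgf 1 a 1 1; pose sb := Sgf 1 b 1 1; pose sc := Sgf 1 c 1 1.
have sa0 : sa 0%N = 0 by apply: Sgf0.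
have eA : fps_mono (a * b * 1) 1 +++ skew_gf a b 1 1 =
          (fps_mono (a * b * 1) 1 ** (C 1 +++ sb)) ** fps_inv_1m (sa ** sb).
  apply: fps_fixpointE; first by rewrite fps_mul0 sa0 mul0r.
  rewrite {1}skew_gf_factor Rgf_factor [Sgf a 1 1 1]Sgf_rev -/sa -/sb; fps_expand; ring.
pose K := fps_mono (a * 1 * 1) 1 +++ skew_gf a 1 1 1.
have eK : sa = K +++ sa ** K.
  by rewrite /sa -Sgf_rev {1}Sgf_split Rgf_factor -/sa /K; fps_expand; ring.
pose L := fps_mono (a * 1 * c) 1 +++ Rgf a 1 c 1.
have eSL : Sgf a 1 c 1 = (C 1 +++ sc) ** L.
  by rewrite {1}Sgf_split skew_gf_factor /L Sgf_compl Sgf_rev -/sc; fps_expand; ring.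
have eL : L = (fps_mono (a * c) 1 ** (C 1 +++ sa)) +++ (sa ** sc) ** L.
  have eL0 : L = fps_mono (a * c) 1 +++ ((C 1 +++ sc) ** L) ** K.
    by rewrite {1}/L Rgf_factor -/K eSL; fps_expand; ring.
  (* Multiplying [eL0] by [1 + sa] lets [eK] eliminate [K]. *)
  have eL1 : (C 1 +++ sa) ** L =
      fps_mono (a * c) 1 ** (C 1 +++ sa) +++ ((C 1 +++ sc) ** L) ** (K +++ sa ** K).
    by rewrite {1}eL0; ring.
  rewrite -eK in eL1.
  transitivity (fps_sub ((C 1 +++ sa) ** L) (sa ** L)); first by ring.
  by rewrite eL1; ring.
have {}eL := fps_fixpointE (_ : (sa ** sc) 0%N = 0) eL.
rewrite /Egf /S_z /= -/sa -/sb -/sc Rgf_factor eA eSL eL; last by rewrite fps_mul0 sa0 mul0r.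
by fps_expand; ring.
Qed.

Lemma Igf_Egf (x y u v : R) : Igf x y u v =
  fps_mono (x * y * u * v) 1 +++ Egf x y u ** S_yuv y u v.
Proof. by rewrite Igf_split skew_gf_factor Egf_Rgf; unfold S_yuv; fps_expand; ring. Qed.

Lemma Rgf_Egf (x y u v : R) : Rgf x y u v = Egf y x v ** S_xuv x u v.
Proof. by rewrite {1}Rgf_factor -Rgf_skew_gf Egf_Rgf; unfold S_xuv; fps_expand; ring. Qed.

End Identities.

Local Open Scope ring_scope.

Theorem theorem9 (R : comRingType) (x y u v : R) :
  [/\ Igf x y u v =
        fps_add (fps_mono (x * y * u * v) 1)
                (fps_mul (Egf x y u) (S_yuv y u v)),
      Rgf x y u v = fps_mul (Egf y x v) (S_xuv x u v)
    & Sgf x y u v =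
        fps_add (fps_mono (x * y * u * v) 1)
          (fps_add (fps_mul (Egf x y u) (S_yuv y u v))
                   (fps_mul (Egf y x v) (S_xuv x u v)))].
Proof.
split; [exact: Igf_Egf | exact: Rgf_Egf |].
by rewrite Sgf_IR Igf_Egf Rgf_Egf fps_addA.
Qed.
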